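(* Let $X$ be a Tychonoff space with $|X|>2$. Then $\mathrm{girth}(\mathbb{AG}(X))=3$.
   Context: $C(X)$ is the ring of real-valued continuous functions on $X$. $\mathbb{A}(X)$ is the set of nonzero ideals $I$ of $C(X)$ for which there is a nonzero ideal $J$ with $IJ=\{0\}$; $\mathbb{AG}(X)$ has vertex set $\mathbb{A}(X)$, distinct $I,J$ adjacent iff $IJ=\{0\}$. The girth is the minimum length of a cycle in the graph. *)

From Stdlib Require Import Reals List.
Open Scope R_scope.

Record topology (X : Type) := {
  is_open : (X -> Prop) -> Prop;
  open_full : is_open (fun _ => True);
  open_empty : is_open (fun _ => False);
  open_inter : forall U V, is_open U -> is_open V ->
                 is_open (fun x => U x /\ V x);
  open_union : forall F : (X -> Prop) -> Prop,
                 (forall U, F U -> is_open U) ->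
                 is_open (fun x => exists U, F U /\ U x)
}.
Arguments is_open {X} t _.

Definition is_closed {X} (t : topology X) (A : X -> Prop) : Prop :=
  is_open t (fun x => ~ A x).

Definition continuous {X} (t : topology X) (f : X -> R) : Prop :=
  forall U : R -> Prop, open_set U -> is_open t (fun x => U (f x)).

(* Tychonoff = T1 + completely regular *)
Definition tychonoff {X} (t : topology X) : Prop :=
  (forall x : X, is_closed t (fun y => y = x)) /\
  (forall (A : X -> Prop) (x : X), is_closed t A -> ~ A x ->
     exists f : X -> R, continuous t f /\ f x = 1 /\
       (forall y, A y -> f y = 0) /\ (forall y, 0 <= f y <= 1)).

(* subsets of C(X) are predicates on X -> R *)
Definition zero_fun {X} : X -> R := fun _ => 0.

Definition is_ideal {X} (t : topology X) (I : (X -> R) -> Prop) : Prop :=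
  (forall f, I f -> continuous t f) /\
  I zero_fun /\
  (forall f g, I f -> I g -> I (fun x => f x + g x)) /\
  (forall h f, continuous t h -> I f -> I (fun x => h x * f x)).

Definition set_eq {X} (I J : (X -> R) -> Prop) : Prop :=
  forall f, I f <-> J f.

Definition nonzero_ideal {X} (t : topology X) (I : (X -> R) -> Prop) : Prop :=
  is_ideal t I /\ ~ set_eq I (fun f => f = zero_fun).

(* product ideal IJ: finite sums of products f g with f in I, g in J *)
Definition ideal_mul {X} (I J : (X -> R) -> Prop) : (X -> R) -> Prop :=
  fun h => exists l : list ((X -> R) * (X -> R)),
    Forall (fun p => I (fst p) /\ J (snd p)) l /\
    h = fold_right (fun p acc => fun x => fst p x * snd p x + acc x)
                   zero_fun l.

Definition mul_is_zero {X} (I J : (X -> R) -> Prop) : Prop :=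
  set_eq (ideal_mul I J) (fun f => f = zero_fun).

Definition annihilating {X} (t : topology X) (I : (X -> R) -> Prop) : Prop :=
  nonzero_ideal t I /\ exists J, nonzero_ideal t J /\ mul_is_zero I J.

Definition AG_adj {X} (t : topology X) (I J : (X -> R) -> Prop) : Prop :=
  annihilating t I /\ annihilating t J /\ ~ set_eq I J /\ mul_is_zero I J.

Definition AG_cycle {X} (t : topology X) (n : nat) : Prop :=
  (3 <= n)%nat /\
  exists c : nat -> ((X -> R) -> Prop),
    (forall i, (i < n)%nat -> annihilating t (c i)) /\
    (forall i j, (i < j < n)%nat -> ~ set_eq (c i) (c j)) /\
    (forall i, (i < n)%nat -> AG_adj t (c i) (c (Nat.modulo (S i) n))).

Definition AG_girth_is {X} (t : topology X) (g : nat) : Prop :=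
  AG_cycle t g /\ forall m, AG_cycle t m -> (g <= m)%nat.

(* Take three distinct points x, y, z and, by complete regularity, bumps f_x, f_y, f_z
   equal to 1 at their own point and 0 at the other two.  The functions
   max(0, f_x - f_y - f_z), ... are nonzero at x, y, z respectively and have pairwise
   disjoint cozero sets, so the ideals of continuous functions supported in these
   cozero sets are three distinct nonzero ideals with pairwise zero products: a
   triangle in AG(X).  No cycle is shorter than 3, so the girth is 3. *)
From Stdlib Require Import Reals Lra Lia Classical FunctionalExtensionality
  PropExtensionality.
Open Scope R_scope.

Lemma pred_ext {A} (P Q : A -> Prop) : (forall x, P x <-> Q x) -> P = Q.
Proof.
  intros H; apply functional_extensionality; intro x.
  apply propositional_extensionality; auto.
Qed.

Definition jointly_continuous (phi : R -> R -> R) : Prop :=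
  forall a b eps, 0 < eps -> exists d, 0 < d /\
    forall u v, Rabs (u - a) < d -> Rabs (v - b) < d -> Rabs (phi u v - phi a b) < eps.

Lemma open_set_ball (a d : R) : open_set (fun u => Rabs (u - a) < d).
Proof.
  intros u Hu. assert (Hp : 0 < d - Rabs (u - a)) by lra.
  exists (mkposreal _ Hp). intros y Hy. unfold disc in Hy; simpl in Hy.
  pose proof (Rabs_triang (y - u) (u - a)) as Htri.
  replace (y - u + (u - a)) with (y - a) in Htri by ring. lra.
Qed.

Lemma continuous_const {X} (t : topology X) (c : R) : continuous t (fun _ => c).
Proof.
  intros U _. destruct (classic (U c)) as [H|H].
  - replace (fun _ : X => U c) with (fun _ : X => True) by (apply pred_ext; tauto).
    apply open_full.
  - replace (fun _ : X => U c) with (fun _ : X => False) by (apply pred_ext; tauto).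
    apply open_empty.
Qed.

Lemma continuous_comp {X} (t : topology X) (phi : R -> R) (f : X -> R) :
  continuity phi -> continuous t f -> continuous t (fun x => phi (f x)).
Proof. intros Hphi Hf U HU. exact (Hf _ (continuity_P2 phi U Hphi HU)). Qed.

(* The preimage of an open U is the union of the open boxes
   {|f - a| < d} /\ {|g - b| < d} whose image under phi lies in U. *)
Lemma continuous_comp2 {X} (t : topology X) phi f g :
  jointly_continuous phi -> continuous t f -> continuous t g ->
  continuous t (fun x => phi (f x) (g x)).
Proof.
  intros Hphi Hf Hg U HU.
  set (F := fun V : X -> Prop => exists a b d, 0 < d /\
     (forall u v, Rabs (u - a) < d -> Rabs (v - b) < d -> U (phi u v)) /\
     V = (fun y => Rabs (f y - a) < d /\ Rabs (g y - b) < d)).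
  replace (fun x => U (phi (f x) (g x))) with (fun x => exists V, F V /\ V x).
  - apply open_union. intros V [a [b [d [Hd [_ ->]]]]].
    apply open_inter; [apply (Hf (fun u => Rabs (u - a) < d)) |
                       apply (Hg (fun u => Rabs (u - b) < d))]; apply open_set_ball.
  - apply pred_ext; intro x; split.
    + intros [V [[a [b [d [Hd [HU2 ->]]]]] [H1 H2]]]. apply HU2; auto.
    + intro Hx. destruct (HU _ Hx) as [eps Heps].
      destruct (Hphi (f x) (g x) eps (cond_pos eps)) as [d [Hd Hd2]].
      exists (fun y => Rabs (f y - f x) < d /\ Rabs (g y - g x) < d). split.
      * exists (f x), (g x), d. repeat split; auto.
        intros u v Hu Hv. apply Heps. apply Hd2; auto.
      * unfold Rminus; rewrite !Rplus_opp_r, Rabs_R0; lra.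
Qed.

Lemma jointly_continuous_plus : jointly_continuous Rplus.
Proof.
  intros a b eps He. exists (eps / 2). split; [lra|]. intros u v Hu Hv.
  pose proof (Rabs_triang (u - a) (v - b)).
  replace (u + v - (a + b)) with (u - a + (v - b)) by ring. lra.
Qed.

Lemma jointly_continuous_mult : jointly_continuous Rmult.
Proof.
  intros a b eps He.
  set (K := Rabs a + Rabs b + 1).
  assert (HK : 0 < K) by (unfold K; pose proof (Rabs_pos a); pose proof (Rabs_pos b); lra).
  exists (Rmin 1 (eps / (2 * K))). split.
  { apply Rmin_pos; [lra|]. apply Rdiv_lt_0_compat; lra. }
  intros u v Hu Hv.
  pose proof (Rmin_l 1 (eps / (2 * K))). pose proof (Rmin_r 1 (eps / (2 * K))).
  set (d := Rmin 1 (eps / (2 * K))) in *.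
  replace (u * v - a * b) with ((u - a) * v + a * (v - b)) by ring.
  pose proof (Rabs_triang ((u - a) * v) (a * (v - b))) as Htri.
  rewrite !Rabs_mult in Htri.
  assert (Hv_le : Rabs v <= Rabs b + 1).
  { pose proof (Rabs_triang (v - b) b) as Hvb.
    replace (v - b + b) with v in Hvb by ring. lra. }
  assert (HdK : d * K <= eps / 2).
  { apply Rle_trans with (eps / (2 * K) * K); [apply Rmult_le_compat_r; lra|].
    right. field. lra. }
  pose proof (Rabs_pos (u - a)). pose proof (Rabs_pos a).
  pose proof (Rabs_pos v). pose proof (Rabs_pos (v - b)).
  assert (Rabs (u - a) * Rabs v <= d * (Rabs b + 1)) by (apply Rmult_le_compat; lra).
  assert (Rabs a * Rabs (v - b) <= Rabs a * d) by (apply Rmult_le_compat_l; lra).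
  unfold K in HdK. nra.
Qed.

Lemma continuous_plus {X} (t : topology X) f g :
  continuous t f -> continuous t g -> continuous t (fun x => f x + g x).
Proof. apply continuous_comp2, jointly_continuous_plus. Qed.

Lemma continuous_mult {X} (t : topology X) f g :
  continuous t f -> continuous t g -> continuous t (fun x => f x * g x).
Proof. apply continuous_comp2, jointly_continuous_mult. Qed.

Lemma continuity_pos_part : continuity (Rmax 0).
Proof.
  replace (Rmax 0) with (fun u => / 2 * (u + Rabs u)).
  - apply continuity_scal, continuity_plus; [apply derivable_continuous, derivable_id |
                                              apply Rcontinuity_abs].
  - apply functional_extensionality; intro u.
    unfold Rmax, Rabs; destruct (Rle_dec 0 u), (Rcase_abs u); lra.
Qed.

Definition supported_in {X} (t : topology X) (P : X -> Prop) : (X -> R) -> Prop :=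
  fun g => continuous t g /\ forall w, g w <> 0 -> P w.

Definition disjoint {X} (P Q : X -> Prop) : Prop := forall w, P w -> Q w -> False.

Lemma supported_in_ideal {X} (t : topology X) P : is_ideal t (supported_in t P).
Proof.
  split; [|split; [|split]].
  - intros f [H _]; exact H.
  - split; [apply continuous_const|]. unfold zero_fun; intros w H; lra.
  - intros f g [Hf Pf] [Hg Pg]. split; [apply continuous_plus; auto|].
    intros w Hw. destruct (Req_dec (f w) 0) as [E|E]; auto.
    apply Pg. rewrite E in Hw. lra.
  - intros h f Hh [Hf Pf]. split; [apply continuous_mult; auto|].
    intros w Hw. apply Pf. intro E. rewrite E in Hw. apply Hw; ring.
Qed.

Lemma supported_in_nonzero {X} (t : topology X) P g x :
  supported_in t P g -> g x <> 0 -> nonzero_ideal t (supported_in t P).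
Proof.
  intros Hg Hx. split; [apply supported_in_ideal|]. intro E.
  apply E in Hg. rewrite Hg in Hx. apply Hx. reflexivity.
Qed.

Lemma supported_in_mul_is_zero {X} (t : topology X) P Q :
  disjoint P Q -> mul_is_zero (supported_in t P) (supported_in t Q).
Proof.
  intros D h; split.
  - intros [l [Hl ->]]. apply functional_extensionality; intro w.
    induction l as [|[a b] l IH]; simpl; [reflexivity|].
    inversion Hl as [|? ? [[_ Ha] [_ Hb]] Hl']; subst.
    unfold zero_fun in *. rewrite IH by assumption.
    destruct (Req_dec (a w) 0) as [E|E]; [rewrite E; ring|].
    destruct (Req_dec (b w) 0) as [E'|E']; [rewrite E'; ring|].
    exfalso; apply (D w); auto.
  - intros ->. exists nil. split; [constructor|reflexivity].
Qed.

Lemma supported_in_neq {X} (t : topology X) P Q g x :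
  supported_in t P g -> g x <> 0 -> disjoint P Q ->
  ~ set_eq (supported_in t P) (supported_in t Q).
Proof.
  intros Hg Hx D E. apply (D x); [exact (proj2 Hg x Hx) | exact (proj2 (proj1 (E g) Hg) x Hx)].
Qed.

Lemma AG_adj_supported_in {X} (t : topology X) P Q g h x y :
  supported_in t P g -> g x <> 0 -> supported_in t Q h -> h y <> 0 ->
  disjoint P Q -> AG_adj t (supported_in t P) (supported_in t Q).
Proof.
  intros Hg Hx Hh Hy D.
  assert (D' : disjoint Q P) by (intros w HQ HP; exact (D w HP HQ)).
  pose proof (supported_in_nonzero t P g x Hg Hx).
  pose proof (supported_in_nonzero t Q h y Hh Hy).
  split; [|split; [|split]].
  - split; auto. exists (supported_in t Q); split; auto. apply supported_in_mul_is_zero, D.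
  - split; auto. exists (supported_in t P); split; auto. apply supported_in_mul_is_zero, D'.
  - apply (supported_in_neq t P Q g x); auto.
  - apply supported_in_mul_is_zero, D.
Qed.

Lemma tychonoff_bump {X} (t : topology X) (x y z : X) :
  tychonoff t -> x <> y -> x <> z ->
  exists f, continuous t f /\ f x = 1 /\ f y = 0 /\ f z = 0 /\ forall w, 0 <= f w.
Proof.
  intros [T1 CR] Hxy Hxz.
  assert (Hyz : is_closed t (fun w => w = y \/ w = z)).
  { unfold is_closed in *.
    replace (fun w => ~ (w = y \/ w = z)) with (fun w => ~ w = y /\ ~ w = z)
      by (apply pred_ext; tauto).
    apply open_inter; auto. }
  destruct (CR _ x Hyz) as [f [Hf [Hfx [Hf0 Hf01]]]]; [intros [E|E]; auto|].
  exists f. repeat split; auto. intro w. apply Hf01.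
Qed.

Definition excess {X} (f g h : X -> R) : X -> R :=
  fun w => Rmax 0 (f w - (g w + h w)).

Lemma continuous_excess {X} (t : topology X) f g h :
  continuous t f -> continuous t g -> continuous t h -> continuous t (excess f g h).
Proof.
  intros Hf Hg Hh. apply (continuous_comp t (Rmax 0)); [exact continuity_pos_part|].
  apply continuous_plus; auto.
  apply (continuous_comp t Ropp); [apply continuity_opp, derivable_continuous, derivable_id|].
  apply continuous_plus; auto.
Qed.

Lemma supported_in_excess {X} (t : topology X) f g h :
  continuous t f -> continuous t g -> continuous t h ->
  supported_in t (fun w => g w + h w < f w) (excess f g h).
Proof.
  intros Hf Hg Hh. split; [apply continuous_excess; auto|].
  intros w. unfold excess, Rmax. destruct (Rle_dec 0 (f w - (g w + h w))); lra.
Qed.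

Lemma excess_at_peak {X} (f g h : X -> R) x :
  f x = 1 -> g x = 0 -> h x = 0 -> excess f g h x <> 0.
Proof.
  intros Hf Hg Hh. unfold excess, Rmax. rewrite Hf, Hg, Hh.
  destruct (Rle_dec 0 (1 - (0 + 0))); lra.
Qed.

Lemma AG_cycle_triangle {X} (t : topology X) I J K :
  AG_adj t I J -> AG_adj t J K -> AG_adj t K I -> AG_cycle t 3.
Proof.
  intros HIJ HJK HKI. split; [lia|].
  exists (fun i => match i with 0%nat => I | 1%nat => J | _ => K end).
  pose proof HIJ as (AI & AJ & NIJ & _). pose proof HKI as (AK & _ & NKI & _).
  pose proof HJK as (_ & _ & NJK & _).
  split; [|split].
  - intros [|[|i]] _; auto.
  - intros [|[|[|i]]] [|[|[|j]]] H; try lia; simpl; auto.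
    intro E. apply NKI. intro f. symmetry. apply E.
  - intros [|[|[|i]]] H; try lia; auto.
Qed.

Theorem mainTheorem14 (X : Type) (t : topology X) :
  tychonoff t ->
  (exists x y z : X, x <> y /\ y <> z /\ x <> z) ->
  AG_girth_is t 3.
Proof.
  intros HT [x [y [z [Hxy [Hyz Hxz]]]]].
  destruct (tychonoff_bump t x y z HT) as (fx & Cx & Fxx & Fxy & Fxz & Nx); auto.
  destruct (tychonoff_bump t y x z HT) as (fy & Cy & Fyy & Fyx & Fyz & Ny); auto.
  destruct (tychonoff_bump t z x y HT) as (fz & Cz & Fzz & Fzx & Fzy & Nz); auto.
  pose proof (supported_in_excess t fx fy fz Cx Cy Cz) as Sx.
  pose proof (supported_in_excess t fy fx fz Cy Cx Cz) as Sy.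
  pose proof (supported_in_excess t fz fx fy Cz Cx Cy) as Sz.
  split; [|intros m [Hm _]; exact Hm].
  apply (AG_cycle_triangle t
    (supported_in t (fun w => fy w + fz w < fx w))
    (supported_in t (fun w => fx w + fz w < fy w))
    (supported_in t (fun w => fx w + fy w < fz w))).
  - apply (AG_adj_supported_in t _ _ _ _ x y Sx (excess_at_peak _ _ _ x Fxx Fyx Fzx)
      Sy (excess_at_peak _ _ _ y Fyy Fxy Fzy)).
    intros w; pose proof (Nx w); pose proof (Ny w); pose proof (Nz w); lra.
  - apply (AG_adj_supported_in t _ _ _ _ y z Sy (excess_at_peak _ _ _ y Fyy Fxy Fzy)
      Sz (excess_at_peak _ _ _ z Fzz Fxz Fyz)).
    intros w; pose proof (Nx w); pose proof (Ny w); pose proof (Nz w); lra.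
  - apply (AG_adj_supported_in t _ _ _ _ z x Sz (excess_at_peak _ _ _ z Fzz Fxz Fyz)
      Sx (excess_at_peak _ _ _ x Fxx Fyx Fzx)).
    intros w; pose proof (Nx w); pose proof (Ny w); pose proof (Nz w); lra.
Qed.
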